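(* For every $k\ge1$ and every $n\ge1$, the families $\mathrm{SLT}_k$ and $\mathrm{RL}_n^P$ are incomparable (neither is contained in the other).
   Context: Strictly locally testable languages: let $V$ be an alphabet and $k\ge1$. For $B,I,E\subseteq V^k$ and $F\subseteq V^{\le k-1}$, $\mathrm{slt}(B,I,E,F)$ is the language over $V$ consisting of all words in $F$ together with all words $a_1\cdots a_n$ ($a_i\in V$, $n\ge k$) with $a_1\cdots a_k\in B$, $a_{j+1}\cdots a_{j+k}\in I$ for all $1\le j\le n-k-1$, and $a_{n-k+1}\cdots a_n\in E$. $\mathrm{SLT}_k$ is the family of languages of this form. A right-linear grammar is $G=(N,T,P,S)$ with rules $A\to wB$ or $A\to w$ ($A,B\in N$, $w\in T^*$). For a regular language $L$, $\mathrm{Prod}_{RL}(L)$ is the minimum of $|P|$ over all right-linear grammars generating $L$; $\mathrm{RL}_n^P=\{L\text{ regular}:\mathrm{Prod}_{RL}(L)\le n\}$. *)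

From mathcomp Require Import all_boot.
Set Implicit Arguments. Unset Strict Implicit. Unset Printing Implicit Defensive.

Definition language (V : finType) := seq V -> Prop.

(* slt(B,I,E,F): words in F, plus words a_1..a_n (n >= k) whose prefix of
   length k is in B, whose factors a_{j+1}..a_{j+k} for 1 <= j <= n-k-1 are
   in I, and whose suffix of length k is in E. *)
Definition slt (V : finType) (k : nat) (B I E F : seq V -> Prop) : language V :=
  fun w =>
    F w \/
    [/\ k <= size w,
        B (take k w),
        (forall j, 1 <= j <= size w - k - 1 -> I (take k (drop j w)))
      & E (drop (size w - k) w)].

Definition SLT (V : finType) (k : nat) (L : language V) : Prop :=
  exists B I E F : seq V -> Prop,
    [/\ (forall w, B w -> size w = k),
        (forall w, I w -> size w = k),
        (forall w, E w -> size w = k),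
        (forall w, F w -> size w <= k - 1)
      & forall w, L w <-> slt k B I E F w].

(* Right-linear grammars with nonterminal type N and terminal alphabet V.
   A rule (A, w, Some B) is A -> wB, a rule (A, w, None) is A -> w. *)
Definition rl_rule (N V : Type) := (N * seq V * option N)%type.

Record rl_grammar (V : finType) := RLGrammar {
  rl_N : finType;
  rl_P : seq (rl_rule rl_N V);
  rl_P_uniq : uniq rl_P;
  rl_S : rl_N
}.

Inductive derives (V : finType) (G : rl_grammar V) : rl_N G -> seq V -> Prop :=
  | der_term A u : (A, u, None) \in rl_P G -> @derives V G A u
  | der_step A u B v : (A, u, Some B) \in rl_P G -> @derives V G B v ->
                       @derives V G A (u ++ v).

Definition rl_lang (V : finType) (G : rl_grammar V) : language V :=
  @derives V G (rl_S G).

Definition nprod (V : finType) (G : rl_grammar V) : nat := size (rl_P G).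

Definition RLP (V : finType) (n : nat) (L : language V) : Prop :=
  exists G : rl_grammar V, nprod G <= n /\ forall w, L w <-> rl_lang G w.

From mathcomp Require Import all_boot zify.
Set Implicit Arguments. Unset Strict Implicit. Unset Printing Implicit Defensive.

(* 1. The full language V^* lies in SLT_k for every k (take B = I = E = V^k
      and F = V^{<= k-1}).  But a right-linear grammar deriving every
      one-letter word a must contain, for each a, a production whose
      terminal part is exactly a; hence it has at least |V| productions, and
      over an alphabet of n+1 letters V^* is not in RL_n^P.
   2. A singleton language {w} is generated by the one-production grammar
      S -> w, so it lies in RL_n^P for n >= 1.  But strictly locally
      testable languages are closed under pumping of long unary words: if
      a^m is in slt(B,I,E,F) with m >= k+2, then every length-k factor a^k
      is allowed in the interior, so a^(m+1) is in the language too.  Hence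
      {a^(k+2)} is not in SLT_k. *)

Lemma full_SLT (V : finType) (k : nat) : SLT k (fun _ : seq V => True).
Proof.
exists (fun w => size w = k), (fun w => size w = k), (fun w => size w = k),
  (fun w => size w <= k - 1); split=> // w; split=> // _.
case: (leqP (size w) (k - 1)) => hw; [by left | right].
have hkw : k <= size w by lia.
split=> //.
- exact: size_takel.
- by move=> j hj; rewrite size_takel // size_drop; lia.
- by rewrite size_drop subKn.
Qed.

(* A derivation of a one-letter word ends with a production whose terminal
   part is that letter: the other productions contribute nothing. *)
Lemma derives_letter (V : finType) (G : rl_grammar V) (A : rl_N G) (a : V) :
  derives A [:: a] -> [:: a] \in [seq r.1.2 | r <- rl_P G].
Proof.
suff: forall w, derives A w -> w = [:: a] -> [:: a] \in [seq r.1.2 | r <- rl_P G].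
  by move=> /[apply]; apply.
move=> w; elim=> [B u Bu | B [|x [|y u]] C v BuC _ IH] //= Ew.
  by apply/mapP; exists (B, u, None).
by case: Ew => <- _; apply/mapP; exists (B, [:: x], Some C).
Qed.

Lemma card_le_nprod (V : finType) (G : rl_grammar V) :
  (forall a : V, rl_lang G [:: a]) -> #|V| <= nprod G.
Proof.
move=> letters.
have uniq_letters : uniq [seq [:: a] | a <- enum V].
  by rewrite map_inj_uniq ?enum_uniq // => a b [].
have letters_used : {subset [seq [:: a] | a <- enum V] <= [seq r.1.2 | r <- rl_P G]}.
  by move=> _ /mapP [a _ ->]; exact: derives_letter (letters a).
by have := uniq_leq_size uniq_letters letters_used; rewrite !size_map cardE enumT.
Qed.

Lemma full_not_RLP (V : finType) (n : nat) :
  n < #|V| -> ~ RLP n (fun _ : seq V => True).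
Proof.
move=> hV [G [hG gen]].
have := card_le_nprod (fun a => proj1 (gen [:: a]) I).
by move/leq_trans/(_ hG); rewrite leqNgt hV.
Qed.

Definition word_grammar (V : finType) (w : seq V) : rl_grammar V :=
  @RLGrammar V unit [:: (tt, w, None)] (erefl _) tt.

Lemma singleton_RLP (V : finType) (n : nat) (w : seq V) :
  1 <= n -> RLP n (fun u => u = w).
Proof.
move=> hn; exists (word_grammar w); split=> // u; split.
  by move=> ->; apply: der_term; rewrite inE.
by case=> [A v | A v B v']; rewrite inE => /eqP // [_ ->].
Qed.

(* Pumping for unary words: a^m in slt(B,I,E,F) with m >= k+2 forces
   a^(m+1) into it, since every length-k factor of either word is a^k. *)
Lemma slt_unary_pump (V : finType) (x : V) (k m : nat) (B I E F : seq V -> Prop) :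
  (forall w, F w -> size w <= k - 1) -> k.+2 <= m ->
  slt k B I E F (nseq m x) -> slt k B I E F (nseq m.+1 x).
Proof.
move=> hF hm; rewrite /slt !size_nseq.
have factor p j : j + k <= p -> take k (drop j (nseq p x)) = nseq k x.
  by move=> hj; rewrite drop_nseq take_nseq //; lia.
have suffix p : k <= p -> drop (p - k) (nseq p x) = nseq k x.
  by move=> hp; rewrite drop_nseq; congr nseq; lia.
case=> [/hF | [_ hB hI hE]]; first by rewrite size_nseq; lia.
have interior : I (nseq k x) by rewrite -(factor m 1); [apply: hI|]; lia.
right; split.
- lia.
- by move: hB; rewrite !take_nseq //; lia.
- by move=> j hj; rewrite factor //; lia.
- by move: hE; rewrite !suffix //; lia.
Qed.

Lemma unary_singleton_not_SLT (V : finType) (x : V) (k m : nat) :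
  k.+2 <= m -> ~ SLT k (fun w : seq V => w = nseq m x).
Proof.
move=> hm [B [I [E [F [_ _ _ hF lang]]]]].
have member : slt k B I E F (nseq m.+1 x).
  exact/(slt_unary_pump hF hm)/lang.
by have /(congr1 size) := proj2 (lang _) member; rewrite !size_nseq; lia.
Qed.

Theorem mainTheorem10 (k n : nat) : 1 <= k -> 1 <= n ->
  (exists (V : finType) (L : language V), SLT k L /\ ~ RLP n L) /\
  (exists (V : finType) (L : language V), RLP n L /\ ~ SLT k L).
Proof.
move=> _ hn; split.
- exists 'I_n.+1, (fun _ => True); split; first exact: full_SLT.
  by apply: full_not_RLP; rewrite card_ord.
- exists unit, (fun w => w = nseq k.+2 tt); split; first exact: singleton_RLP.
  exact: unary_singleton_not_SLT.
Qed.
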